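(* In the setting below, assume consistency, positivity and no unmeasured confounders. Fix $a\in\{0,1\}$ and, for $j=1,\ldots,p$, let the causal estimand $\theta_{aj}$ be the solution of $M_j(\theta):=\mathbb E[F_j(Y_j(a),\theta)]=0$, where each $M_j$ is differentiable and there are constants $c,\delta>0$ with $\min_{1\le j\le p}\inf_{\theta\in\mathcal B(\theta_{aj},\delta)}|M_j'(\theta)|\ge c$. Suppose $F_j(\tilde Y_j(a),\theta)$ is asymptotically unbiased for $F_j(Y_j(a),\theta)$, i.e., with $\Delta_{mj}(a,\theta)=\mathbb E[F_j(\tilde Y_j(a),\theta)\mid\mathbf S(a),\mathbf W]-F_j(Y_j(a),\theta)$, one has $\delta_m:=\max_{j\in[p]}\sup_{\theta\in\mathcal B(\theta_{aj},\delta)}|\mathbb E[\Delta_{mj}(a,\theta)]|=o(1)$ as $m\to\infty$. Let $\tilde\theta_{aj}\in\mathcal B(\theta_{aj},\delta)$ be a solution of $\mathbb E[\mathbb E[F_j(\tilde Y_j,\theta)\mid A=a,\mathbf W]]=0$. Then $\theta_{aj}$ is identified by $\tilde\theta_{aj}$ as $m\to\infty$, in the sense that $\tilde\theta_{aj}-\theta_{aj}\to 0$ as $m\to\infty$.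
   Context: Setting. $(A,\mathbf W,\mathbf S(0),\mathbf S(1),\mathbf X(0),\mathbf X(1))$ is drawn from a super-population, $A\in\{0,1\}$ treatment, $\mathbf W\in\mathbb R^q$ covariates, $\mathbf S(a)\in\mathbb R^\ell$ latent potential state, $\mathbf X(a)=[\mathbf X_1(a),\ldots,\mathbf X_m(a)]^\top\in\mathbb R^{m\times d}$ potential responses with rows conditionally i.i.d. given $(\mathbf S(a),\mathbf W)$. Potential outcome $\mathbf Y(a)=\mathbb E[f(\mathbf X_1(a))\mid\mathbf S(a),\mathbf W]\in\mathbb R^p$ for a prespecified $f$; derived outcome $\tilde{\mathbf Y}(a)=g(\mathbf X(a))$ and $\tilde{\mathbf Y}=g(\mathbf X)$ for prespecified $g$. Consistency: $\mathbf X=A\mathbf X(1)+(1-A)\mathbf X(0)$. Positivity: $\mathbb P(A=a\mid\mathbf W)\in(0,1)$. No unmeasured confounders: $A\perp\mathbf X(a)\mid\mathbf W$. $F_j:\mathbb R\times\mathbb R\to\mathbb R$ are given estimating functions; $\mathcal B(x,r)$ is the closed ball of radius $r$ around $x$. *)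

From HB Require Import structures.
From mathcomp Require Import all_boot all_order all_algebra.
From mathcomp Require Import all_classical all_reals all_analysis measurable_realfun.
Set Implicit Arguments. Unset Strict Implicit. Unset Printing Implicit Defensive.
Import Order.TTheory GRing.Theory Num.Theory.
Import numFieldNormedType.Exports.
Local Open Scope classical_set_scope.
Local Open Scope ring_scope.

(* [cond_exp_version P V Z phi]: the integrable real random variable Z has
   phi \o V as a version of the conditional expectation E[Z | V]
   (i.e. E[Z | sigma(V)] = phi(V)), with phi measurable. *)
Definition cond_exp_version {d dU} {T : measurableType d}
  {U : measurableType dU} {R : realType} (P : probability T R)
  (V : T -> U) (Z : T -> R) (phi : U -> R) : Prop :=
  [/\ P.-integrable setT (fun x => (Z x)%:E),
      measurable_fun setT phi,
      P.-integrable setT (fun x => (phi (V x))%:E) &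
      forall C, measurable C ->
        (\int[P]_(x in V @^-1` C) (Z x)%:E =
         \int[P]_(x in V @^-1` C) (phi (V x))%:E)%E ].

Definition ind {T} {R : realType} (E : set T) : T -> R :=
  fun x => if `[< E x >] then 1 else 0.

Definition gen_events {d} {I : Type} {T : Type} {TX : measurableType d}
  (Xs : I -> T -> TX) : set (set T) :=
  <<s [set E | exists i B, measurable B /\ E = Xs i @^-1` B] >>.

(* Conditional independence of A and the family Xs given W:
   for every event E in sigma(Xs), P(E | A, W) = P(E | W) a.s., i.e. there
   is a function psi of W alone which is a version of both P(E | W) and
   P(E | A, W). *)
Definition cond_indep_given {d dW dX} {T : measurableType d}
  {TW : measurableType dW} {TX : measurableType dX} {R : realType}
  (P : probability T R) (A : T -> bool) {I : Type} (Xs : I -> T -> TX)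
  (W : T -> TW) : Prop :=
  forall E, gen_events Xs E ->
    exists psi : TW -> R,
      cond_exp_version P W (ind E) psi /\
      cond_exp_version P (fun x => (A x, W x)) (ind E) (fun u => psi u.2).

(* The rows (Xs i)_{i in nat} are conditionally i.i.d. given V: there is a
   probability kernel kappa from the range of V to the row space such that
   for every m the conditional joint law of (Xs 0, ..., Xs (m-1)) given V is
   the m-fold product kappa(V)^{(x) m}. *)
Definition cond_iid_given {d dV dX} {T : measurableType d}
  {TV : measurableType dV} {TX : measurableType dX} {R : realType}
  (P : probability T R) (Xs : nat -> T -> TX) (V : T -> TV) : Prop :=
  exists kappa : TV -> probability TX R,
    (forall B, measurable B -> measurable_fun setT (fun u => (kappa u B : \bar R))) /\
    forall (m : nat) (B : nat -> set TX) (C : set TV),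
      (forall i, measurable (B i)) -> measurable C ->
      P (V @^-1` C `&` \bigcap_(i in [set i | (i < m)%N]) (Xs i @^-1` B i)) =
      (\int[P]_(x in V @^-1` C)
          (\prod_(i < m) fine (kappa (V x) (B i)))%:E)%E.

Definition prod_measurable {dX} {TX : measurableType dX} {R : realType}
  (m : nat) (h : ('I_m -> TX) -> R) : Prop :=
  forall B : set R, measurable B ->
    <<s [set E | exists (i : 'I_m) (C : set TX), measurable C /\
                   E = [set r | C (r i)]] >> (h @^-1` B).

From HB Require Import structures.
From mathcomp Require Import all_boot all_order all_algebra.
From mathcomp Require Import all_classical all_reals all_analysis measurable_realfun.
From mathcomp Require Import lra.
Import Order.TTheory GRing.Theory Num.Theory.
Import numFieldNormedType.Exports.
Import HBNNSimple.
Local Open Scope classical_set_scope.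
Local Open Scope ring_scope.

(* The core is the adjustment formula E[Z(a)] = E[E[Z | A = a, W]] for the
   estimating function Z = F_j(tY_j, ttheta_mj), proved by inverse probability
   weighting.  With q(W) = P(A = a | W) > 0, the weight 1{A = a} / q(W)
   integrates every nonnegative function of W to its mean; by conditional
   ignorability it therefore integrates every event of sigma(Z(a)) to its
   probability, hence every nonnegative function of Z(a) to its mean; and on
   {A = a} it turns Z into Z(a) and E[Z | A, W] into E[Z | A = a, W].  As the
   weight need not be integrable against Z, these identities are applied to
   positive and negative parts separately.
   The adjustment formula gives M_j(ttheta_mj) = - E[Delta_mj(a, ttheta_mj)],
   so |M_j(ttheta_mj)| <= delta_m, and the mean value theorem with |M_j'| >= c
   on the ball yields c |ttheta_mj - theta_aj| <= delta_m -> 0. *)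

Lemma measurable_invr (R : realType) : measurable_fun [set: R] GRing.inv.
Proof.
rewrite -(setUv [set 0%R]) setUC measurable_funU //; last exact: measurableC.
split; last exact: measurable_fun_set1.
apply: open_continuous_measurable_fun.
  by apply/closed_openC/accessible_closed_set1; exact: hausdorff_accessible.
by move=> x; rewrite inE => /eqP x0; exact: inv_continuous.
Qed.

Lemma sube_eq_adde {R : realDomainType} {x1 y1 x2 y2 : \bar R} :
  x1 \is a fin_num -> y1 \is a fin_num -> x2 \is a fin_num -> y2 \is a fin_num ->
  (x1 - y1 = x2 - y2 <-> x1 + y2 = x2 + y1)%E.
Proof.
move: x1 y1 x2 y2 => [x1| |] [y1| |] [x2| |] [y2| |] // _ _ _ _.
by rewrite -!EFinB -!EFinD; split=> -[h]; congr EFin; lra.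
Qed.

Section integral_funrposneg.
Local Open Scope ereal_scope.
Context {d} {T : measurableType d} {R : realType} (mu : {measure set T -> \bar R}).

Lemma integral_funrposneg (D : set T) (f : T -> R) :
  \int[mu]_(x in D) (f x)%:E =
  \int[mu]_(x in D) (f^\+ x)%:E - \int[mu]_(x in D) (f^\- x)%:E.
Proof. by rewrite (integralE _ _ (EFin \o f)) funerpos funerneg. Qed.

Lemma integral_mul_ind (E : set T) (f : T -> \bar R) :
  \int[mu]_(x in E) f x = \int[mu]_x (f x * (ind E x)%:E).
Proof.
rewrite integral_mkcond; apply: eq_integral => x _; rewrite /patch /ind.
case: ifPn => [/set_mem Ex|/negP xE]; first by rewrite asboolT ?mule1.
by rewrite asboolF ?mule0 // => Ex; apply: xE; exact: mem_set.
Qed.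

End integral_funrposneg.

Section ge0_integral_comp_mul.
Local Open Scope ereal_scope.
Context {d dU} {T : measurableType d} {U : measurableType dU} {R : realType}
  (mu : {measure set T -> \bar R}) {V : T -> U}.
Hypothesis mV : measurable_fun setT V.

Let measurable_preimageV C : measurable C -> measurable (V @^-1` C).
Proof. by move=> mC; rewrite -[_ @^-1` _]setTI; exact: mV. Qed.

Lemma ge0_integral_nnsfun_comp_mul (s : {nnsfun U >-> R}) (k : T -> R) :
  measurable_fun setT k -> (forall x, 0 <= k x)%R ->
  \int[mu]_x (s (V x) * k x)%:E =
  \sum_(r \in range s) r%:E * \int[mu]_(x in V @^-1` (s @^-1` [set r])) (k x)%:E.
Proof.
move=> mk k0.
have mind r : measurable_fun setT (fun x => \1_(s @^-1` [set r]) (V x) : R).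
  by apply: measurableT_comp => //; exact: measurable_indic.
transitivity (\int[mu]_x (\sum_(r \in range s)
    ((r * \1_(s @^-1` [set r]) (V x))%:E * (k x)%:E))).
  apply: eq_integral => x _.
  rewrite -ge0_mule_fsuml; last by move=> r; exact: nnfun_muleindic_ge0.
  by rewrite fsumEFin // -fimfunE EFinM.
rewrite ge0_integral_fsum //; last 2 first.
- move=> r; apply: emeasurable_funM; apply/measurable_EFinP => //.
  exact: measurable_funM.
- by move=> r x _; apply: mule_ge0; [exact: nnfun_muleindic_ge0|rewrite lee_fin].
apply: eq_fsbigr => r rs.
under eq_integral do rewrite EFinM -muleA.
rewrite ge0_integralZl //; last 3 first.
- by apply: emeasurable_funM; exact/measurable_EFinP.
- by move=> x _; rewrite mule_ge0 ?lee_fin.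
- by move: rs; rewrite inE => -[t _ <-]; rewrite lee_fin.
congr (_ * _); rewrite [RHS]integral_mkcond; apply: eq_integral => x _.
rewrite /patch /indic /=; case: ifPn => [/set_mem rx|/negP rx].
  by rewrite mem_set ?mul1e.
by rewrite memNset ?mul0e // => ?; apply: rx; exact: mem_set.
Qed.

Lemma ge0_integral_comp_mul_eq (k1 k2 : T -> R) (h : U -> R) :
  measurable_fun setT k1 -> measurable_fun setT k2 ->
  (forall x, 0 <= k1 x)%R -> (forall x, 0 <= k2 x)%R ->
  (forall C, measurable C ->
    \int[mu]_(x in V @^-1` C) (k1 x)%:E = \int[mu]_(x in V @^-1` C) (k2 x)%:E) ->
  measurable_fun setT h -> (forall x, 0 <= h (V x))%R ->
  \int[mu]_x (h (V x) * k1 x)%:E = \int[mu]_x (h (V x) * k2 x)%:E.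
Proof.
move=> mk1 mk2 k10 k20 eqk mh h0.
have hE (k : T -> R) :
    \int[mu]_x (h (V x) * k x)%:E = \int[mu]_x (h^\+ (V x) * k x)%:E.
  by apply: eq_integral => x _; rewrite /funrpos (max_idPl (h0 x)).
rewrite !hE; move: (funrpos_ge0 h) (measurable_funrpos mh).
move: (h^\+)%R => {hE h0 mh}f f0 mf.
have mEf : measurable_fun setT (EFin \o f) by exact/measurable_EFinP.
pose s := nnsfun_approx measurableT mEf.
have approx (k : T -> R) : measurable_fun setT k -> (forall x, 0 <= k x)%R ->
    \int[mu]_x (f (V x) * k x)%:E =
    limn (fun n => \int[mu]_x (s n (V x) * k x)%:E).
  move=> mk k0; rewrite -monotone_convergence //; last 3 first.
  - move=> n; apply/measurable_EFinP/measurable_funM => //.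
    exact: measurableT_comp.
  - by move=> n x _; rewrite lee_fin mulr_ge0.
  - by move=> x _ m n mn; rewrite lee_fin ler_wpM2r //; exact/lefP/nd_nnsfun_approx.
  apply: eq_integral => x _; apply/esym/cvg_lim => //; rewrite EFinM.
  under eq_fun do rewrite EFinM.
  apply: cvgeZr => //.
  exact: (cvg_nnsfun_approx measurableT mEf (fun y _ => f0 y) (I : setT (V x))).
rewrite (approx k1) // (approx k2) //; congr (limn _); apply/funext => n.
rewrite !ge0_integral_nnsfun_comp_mul //; apply: eq_fsbigr => r _.
by rewrite eqk //; rewrite -[_ @^-1` _]setTI; exact: measurable_funP.
Qed.

Lemma integral_comp_mul_funrposneg (Y1 Y2 : T -> R) (h : U -> R) :
  mu.-integrable setT (EFin \o Y1) -> mu.-integrable setT (EFin \o Y2) ->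
  (forall C, measurable C ->
    \int[mu]_(x in V @^-1` C) (Y1 x)%:E = \int[mu]_(x in V @^-1` C) (Y2 x)%:E) ->
  measurable_fun setT h -> (forall x, 0 <= h (V x))%R ->
  \int[mu]_x (h (V x) * Y1^\+ x)%:E + \int[mu]_x (h (V x) * Y2^\- x)%:E =
  \int[mu]_x (h (V x) * Y2^\+ x)%:E + \int[mu]_x (h (V x) * Y1^\- x)%:E.
Proof.
move=> iY1 iY2 eqY mh h0.
have [mY1 mY2] : measurable_fun setT Y1 /\ measurable_fun setT Y2.
  by split; apply/measurable_EFinP; exact: (measurable_int mu).
have integralDr (D : set T) (k1 k2 : T -> R) : measurable D ->
    measurable_fun setT k1 -> measurable_fun setT k2 ->
    (forall x, 0 <= k1 x)%R -> (forall x, 0 <= k2 x)%R ->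
    \int[mu]_(x in D) (k1 x + k2 x)%:E =
    \int[mu]_(x in D) (k1 x)%:E + \int[mu]_(x in D) (k2 x)%:E.
  move=> mD mk1 mk2 k10 k20; under eq_integral do rewrite EFinD.
  rewrite ge0_integralD //.
  - by move=> x _; rewrite lee_fin.
  - exact/measurable_funTS/measurable_EFinP.
  - by move=> x _; rewrite lee_fin.
  - exact/measurable_funTS/measurable_EFinP.
have mposneg (Y Z : T -> R) : measurable_fun setT Y -> measurable_fun setT Z ->
    measurable_fun setT (Y^\+ \+ Z^\-)%R.
  by move=> mY mZ; apply: measurable_funD;
    [exact: measurable_funrpos|exact: measurable_funrneg].
have mulD (Y Z : T -> R) : measurable_fun setT Y -> measurable_fun setT Z ->
    \int[mu]_x (h (V x) * Y^\+ x)%:E + \int[mu]_x (h (V x) * Z^\- x)%:E =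
    \int[mu]_x (h (V x) * (Y^\+ \+ Z^\-) x)%:E.
  move=> mY mZ; under [RHS]eq_integral do rewrite mulrDr.
  rewrite integralDr // => [||x|x]; rewrite ?mulr_ge0 //; apply: measurable_funM.
  - exact: measurableT_comp.
  - exact: measurable_funrpos.
  - exact: measurableT_comp.
  - exact: measurable_funrneg.
rewrite !mulD //; apply: ge0_integral_comp_mul_eq => //; try exact: mposneg.
- by move=> x; rewrite addr_ge0.
- by move=> x; rewrite addr_ge0.
move=> C mC; have mVC := measurable_preimageV _ mC.
have fin (Y : T -> R) : mu.-integrable setT (EFin \o Y) ->
    \int[mu]_(x in V @^-1` C) (Y^\+ x)%:E \is a fin_num /\
    \int[mu]_(x in V @^-1` C) (Y^\- x)%:E \is a fin_num.
  move=> /(integrableS measurableT mVC (@subsetT _ _)) iY.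
  by split; [move: (integrable_pos_fin_num mVC iY); rewrite funerpos
            |move: (integrable_neg_fin_num mVC iY); rewrite funerneg].
have [f1p f1n] := fin _ iY1; have [f2p f2n] := fin _ iY2.
have [mY1p mY1n] := (measurable_funrpos mY1, measurable_funrneg mY1).
have [mY2p mY2n] := (measurable_funrpos mY2, measurable_funrneg mY2).
rewrite !integralDr //; apply/(sube_eq_adde f1p f1n f2p f2n).
by rewrite -!integral_funrposneg; exact: eqY.
Qed.

End ge0_integral_comp_mul.

Section adjustment_formula.
Local Open Scope ereal_scope.
Context {d dW} {T : measurableType d} {TW : measurableType dW} {R : realType}
  (P : probability T R) {A : T -> bool} {W : T -> TW} (a : bool) (pi : TW -> R).
Hypotheses (mA : measurable_fun setT A) (mW : measurable_fun setT W).
Hypothesis pi_version : cond_exp_version P W (ind [set x | A x]) pi.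
Hypothesis pi01 : forall x, (0 < pi (W x) < 1)%R.

Let q (w : TW) : R := if a then pi w else (1 - pi w)%R.
Let treated (b : bool) : R := (b == a)%:R.
Let ipw (x : T) : R := (treated (A x) / q (W x))%R.

Let q_gt0 x : (0 < q (W x))%R.
Proof. by rewrite /q; have /andP[? ?] := pi01 x; case: a; rewrite ?subr_gt0. Qed.

Let mq : measurable_fun setT q.
Proof.
have [_ mpi _ _] := pi_version.
by rewrite /q; case: a => //; exact: measurable_funB.
Qed.

Let mtreated : measurable_fun setT treated.
Proof. by []. Qed.

Let mipw : measurable_fun setT ipw.
Proof.
apply: measurable_funM; first exact: measurableT_comp.
exact: measurableT_comp (measurable_invr R) (measurableT_comp mq mW).
Qed.

Let ipw_ge0 x : (0 <= ipw x)%R.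
Proof. by rewrite /ipw divr_ge0 // ltW. Qed.

Let ipw_mul_eq (f g : T -> R) x :
  (A x = a -> f x = g x) -> (ipw x * f x = ipw x * g x)%R.
Proof. by rewrite /ipw /treated; case: eqP => [/[swap]/[apply]->|]; rewrite ?mul0r. Qed.

Lemma integral_treated_preimageW C : measurable C ->
  \int[P]_(x in W @^-1` C) (treated (A x))%:E =
  \int[P]_(x in W @^-1` C) (q (W x))%:E.
Proof.
move=> mC; have [iind _ ipi eqpi] := pi_version.
have mWC : measurable (W @^-1` C) by rewrite -[_ @^-1` _]setTI; exact: mW.
have indA x : ind [set x | A x] x = (A x)%:R%R :> R.
  by rewrite /ind /= asboolb; case: (A x).
rewrite -/(q (W _)) /q /treated; case: a.
  by rewrite -eqpi //; apply: eq_integral => x _; rewrite indA eqb_id.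
transitivity (\int[P]_(x in W @^-1` C) ((1 - ind [set x | A x] x)%R%:E)).
  by apply: eq_integral => x _; rewrite indA; case: (A x); rewrite ?subrr ?subr0.
have i1 : P.-integrable (W @^-1` C) (EFin \o cst 1%R).
  exact: finite_measure_integrable_cst.
have isub (f : T -> R) : P.-integrable setT (EFin \o f) ->
    P.-integrable (W @^-1` C) (EFin \o f).
  exact: integrableS measurableT mWC (@subsetT _ _).
under eq_integral do rewrite EFinB.
under [RHS]eq_integral do rewrite EFinB.
rewrite (integralB mWC i1 (isub _ iind)) (integralB mWC i1 (isub _ ipi)).
by rewrite eqpi.
Qed.

Lemma integral_ipw_compW (v : TW -> R) :
  measurable_fun setT v -> (forall w, 0 <= v w)%R ->
  \int[P]_x (ipw x * v (W x))%:E = \int[P]_x (v (W x))%:E.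
Proof.
move=> mv v0.
have mvq : measurable_fun setT (fun w => v w / q w)%R.
  by apply: measurable_funM => //; exact: measurableT_comp (measurable_invr R) mq.
transitivity (\int[P]_x (v (W x) / q (W x) * treated (A x))%:E).
  by apply: eq_integral => x _; rewrite /ipw mulrC mulrCA mulrC.
transitivity (\int[P]_x (v (W x) / q (W x) * q (W x))%:E).
  apply: (ge0_integral_comp_mul_eq P mW (treated \o A) (q \o W)
           (fun w => v w / q w)%R) => //.
  - exact: measurableT_comp.
  - exact: measurableT_comp.
  - by move=> x; exact: ltW (q_gt0 x).
  - exact: integral_treated_preimageW.
  - by move=> x; rewrite divr_ge0 // ltW.
by apply: eq_integral => x _; rewrite /= divfK // gt_eqF.
Qed.

Lemma integral_ipw_cond_exp (Y : T -> R) (ce : bool * TW -> R) :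
  cond_exp_version P (fun x => (A x, W x)) Y ce ->
  \int[P]_x (ipw x * Y^\+ x)%:E + \int[P]_x ((fun w => ce (a, w))^\- (W x))%:E =
  \int[P]_x ((fun w => ce (a, w))^\+ (W x))%:E + \int[P]_x (ipw x * Y^\- x)%:E.
Proof.
move=> [iY mce ice eqce].
have mAW : measurable_fun setT (fun x => (A x, W x)) by exact: measurable_fun_pair.
have mcea : measurable_fun setT (fun w => ce (a, w)) by exact: measurable_fun_pair2.
have mweight : measurable_fun setT (fun z : bool * TW => treated z.1 / q z.2)%R.
  apply: measurable_funM; first exact: measurableT_comp.
  exact: measurableT_comp (measurable_invr R) (measurableT_comp mq measurable_snd).
have := integral_comp_mul_funrposneg P mAW _ _ _ iY ice eqce mweight ipw_ge0.
have ipw_cea (f : T -> R) (v : TW -> R) :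
    measurable_fun setT v -> (forall w, 0 <= v w)%R ->
    (forall x, A x = a -> f x = v (W x)) ->
    \int[P]_x (ipw x * f x)%:E = \int[P]_x (v (W x))%:E.
  move=> mv v0 fv; rewrite -(integral_ipw_compW _ mv v0).
  by apply: eq_integral => x _; rewrite (ipw_mul_eq f (v \o W) x (fv x)).
rewrite -(ipw_cea (fun x => ce (A x, W x))^\+%R (fun w => ce (a, w))^\+%R); first last.
- by move=> x Ax; rewrite /funrpos /funrneg Ax.
- exact: funrpos_ge0.
- exact: measurable_funrpos.
rewrite -(ipw_cea (fun x => ce (A x, W x))^\-%R (fun w => ce (a, w))^\-%R); first last.
- by move=> x Ax; rewrite /funrpos /funrneg Ax.
- exact: funrneg_ge0.
- exact: measurable_funrneg.
exact.
Qed.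

Lemma integral_ipw_event (E : set T) (psi : TW -> R) :
  cond_exp_version P W (ind E) psi ->
  cond_exp_version P (fun x => (A x, W x)) (ind E) (fun u => psi u.2) ->
  \int[P]_(x in E) (ipw x)%:E = \int[P]_(x in E) 1.
Proof.
move=> [_ _ ipsi eqpsi] versionAW.
have ind_ge0 x : (0 <= ind E x :> R)%R by rewrite /ind; case: ifP.
have := integral_ipw_cond_exp _ _ versionAW.
under eq_integral do rewrite (ge0_funrposE (D := setT)) ?inE //.
under [X in _ = _ + X]eq_integral do rewrite (ge0_funrnegE (D := setT)) ?inE //= mulr0.
rewrite integral0 adde0 => eq_ipw.
rewrite integral_mul_ind [RHS]integral_mul_ind.
under eq_integral do rewrite -EFinM.
under [RHS]eq_integral do rewrite mul1e.
have := eqpsi setT measurableT; rewrite preimage_setT => ->.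
have fin_neg : \int[P]_x ((psi \o W)^\- x)%:E \is a fin_num.
  by move: (integrable_neg_fin_num measurableT ipsi); rewrite funerneg.
by rewrite [RHS]integral_funrposneg -[X in _ = X - _]eq_ipw addeK.
Qed.

Lemma integral_ipw_comp (Z : T -> R) (h : R -> R) :
  measurable_fun setT Z -> cond_indep_given P A (fun _ : unit => Z) W ->
  measurable_fun setT h -> (forall r, 0 <= h r)%R ->
  \int[P]_x (ipw x * h (Z x))%:E = \int[P]_x (h (Z x))%:E.
Proof.
move=> mZ indepZ mh h0.
transitivity (\int[P]_x (h (Z x) * ipw x)%:E).
  by under eq_integral do rewrite mulrC.
transitivity (\int[P]_x (h (Z x) * cst 1%R x)%:E); last first.
  by under eq_integral do rewrite mulr1.
apply: (ge0_integral_comp_mul_eq P mZ ipw (cst 1%R) h) => // C mC.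
have genC : gen_events (fun _ : unit => Z) (Z @^-1` C).
  by apply: sub_sigma_algebra; exists tt, C.
have [psi [versionW versionAW]] := indepZ _ genC.
exact: integral_ipw_event versionW versionAW.
Qed.

Lemma adjustment_formula (Y Ya : T -> R) (ce : bool * TW -> R) :
  P.-integrable setT (EFin \o Ya) ->
  cond_indep_given P A (fun _ : unit => Ya) W ->
  (forall x, A x = a -> Y x = Ya x) ->
  cond_exp_version P (fun x => (A x, W x)) Y ce ->
  \int[P]_x (ce (a, W x))%:E \is a fin_num ->
  \int[P]_x (Ya x)%:E = \int[P]_x (ce (a, W x))%:E.
Proof.
move=> iYa indepYa YYa versionY.
rewrite [X in X \is a fin_num -> _]integral_funrposneg fin_numB => /andP[fin_p fin_n].
have mYa : measurable_fun setT Ya by apply/measurable_EFinP; exact: (measurable_int P).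
have ipw_Y (h : R -> R) : measurable_fun setT h -> (forall r, 0 <= h r)%R ->
    \int[P]_x (ipw x * h (Y x))%:E = \int[P]_x (h (Ya x))%:E.
  move=> mh h0; rewrite -(integral_ipw_comp _ _ mYa indepYa mh h0).
  apply: eq_integral => x _.
  by rewrite (ipw_mul_eq (h \o Y) (h \o Ya) x) // => /YYa /= ->.
have := integral_ipw_cond_exp _ _ versionY.
rewrite (ipw_Y (@id R)^\+%R) ?(ipw_Y (@id R)^\-%R); last 4 first.
- exact: measurable_funrneg.
- exact: funrneg_ge0.
- exact: measurable_funrpos.
- exact: funrpos_ge0.
move=> eq_posneg; rewrite integral_funrposneg [RHS]integral_funrposneg.
have fin_Yp := integrable_pos_fin_num measurableT iYa; rewrite funerpos in fin_Yp.
have fin_Yn := integrable_neg_fin_num measurableT iYa; rewrite funerneg in fin_Yn.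
exact/(sube_eq_adde fin_Yp fin_Yn fin_p fin_n).
Qed.

End adjustment_formula.

Definition row_cylinders {dX} {TX : measurableType dX} (m : nat) :
  set (set ('I_m -> TX)) :=
  [set E | exists (i : 'I_m) (C : set TX), measurable C /\ E = [set r | C (r i)]].

Lemma prod_measurable_comp {dX} {TX : measurableType dX} {R : realType} (m : nat)
  (h : ('I_m -> TX) -> R) (k : R -> R) :
  measurable_fun setT k -> prod_measurable h -> prod_measurable (k \o h).
Proof.
move=> mk mh B mB; apply: (mh (k @^-1` B)).
by rewrite -[_ @^-1` _]setTI; exact: mk.
Qed.

Section cond_indep_given_rows.
Context {d dW dX} {T : measurableType d} {TW : measurableType dW}
  {TX : measurableType dX} {R : realType} (P : probability T R)
  {A : T -> bool} {W : T -> TW}.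

Lemma cond_indep_given_sub {I J : Type} {dY} {TY : measurableType dY}
    (Xs : I -> T -> TX) (Ys : J -> T -> TY) :
  (forall j B, measurable B -> gen_events Xs (Ys j @^-1` B)) ->
  cond_indep_given P A Xs W -> cond_indep_given P A Ys W.
Proof.
move=> genYX indepX E genE; apply: indepX; move: E genE.
apply: smallest_sub; first exact: smallest_sigma_algebra.
by move=> _ [j [B [mB ->]]]; exact: genYX.
Qed.

Lemma gen_events_preimage_rows (Xs : nat -> T -> TX) (m : nat)
    (Y : set ('I_m -> TX)) :
  <<s row_cylinders m >> Y ->
  gen_events Xs ((fun x (i : 'I_m) => Xs (val i) x) @^-1` Y).
Proof.
set rows := fun x (i : 'I_m) => Xs (val i) x => genY.
have : <<s setT, preimage_set_system setT rows (row_cylinders m) >> (rows @^-1` Y).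
  by rewrite g_sigma_preimageE; exists Y => //; rewrite setTI.
apply: sub_smallest2r; first exact: smallest_sigma_algebra.
move=> _ [_ [i [C [mC ->]]] <-]; exists (val i), C; split => //.
by rewrite setTI.
Qed.

Lemma cond_indep_given_rows (Xs : nat -> T -> TX) (m : nat)
    (h : ('I_m -> TX) -> R) :
  prod_measurable h -> cond_indep_given P A Xs W ->
  cond_indep_given P A (fun _ : unit => fun x => h (fun i => Xs (val i) x)) W.
Proof.
move=> mh; apply: cond_indep_given_sub => _ B mB.
exact: (gen_events_preimage_rows _ _ (h @^-1` B) (mh B mB)).
Qed.

End cond_indep_given_rows.

Lemma dist_root_le_norm {R : realType} {f : R -> R} {t0 c delta t : R} :
  (forall x, derivable f x 1) -> f t0 = 0 ->
  (forall x, `|x - t0| <= delta -> c <= `|derive1 f x|) ->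
  `|t - t0| <= delta -> c * `|t - t0| <= `|f t|.
Proof.
move=> df ft0 hc ht.
have mvt u v : u < v -> (forall x, u < x < v -> `|x - t0| <= delta) ->
    c * (v - u) <= `|f v - f u|.
  move=> uv uvB.
  have [xi] := MVT uv (fun x _ => derivableP (df x))
    (derivable_within_continuous (fun x _ => df x)).
  rewrite in_itv /= => xi_uv ->.
  rewrite normrM [`|v - u|]gtr0_norm ?subr_gt0 // ler_wpM2r ?subr_ge0 ?(ltW uv) //.
  by rewrite -derive1E; apply: hc; exact: uvB.
have [tt0|t0t|<-] := ltgtP t t0; last by rewrite subrr normr0 mulr0 normr_ge0.
- have -> : `|f t| = `|f t0 - f t| by rewrite ft0 sub0r normrN.
  rewrite distrC gtr0_norm ?subr_gt0 //.
  apply: mvt => // x /andP[tx xt0]; rewrite ltr0_norm ?subr_lt0 //.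
  by move: ht; rewrite ltr0_norm ?subr_lt0 // => ht; lra.
- have -> : `|f t| = `|f t - f t0| by rewrite ft0 subr0.
  rewrite gtr0_norm ?subr_gt0 //.
  apply: mvt => // x /andP[t0x xt]; rewrite gtr0_norm ?subr_gt0 //.
  by move: ht; rewrite gtr0_norm ?subr_gt0 // => ht; lra.
Qed.

Theorem lemma4
  (R : realType) (d dW dS dX : measure_display)
  (T : measurableType d) (P : probability T R)
  (TW : measurableType dW) (TS : measurableType dS) (TX : measurableType dX)
  (p : nat)
  (* treatment, covariates, latent potential states, potential rows *)
  (A : T -> bool) (W : T -> TW) (S : bool -> T -> TS)
  (Xpot : bool -> nat -> T -> TX)
  (* observed rows *)
  (X : nat -> T -> TX)
  (* prespecified f, g (g m acts on the first m rows) and estimating fns *)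
  (f : TX -> 'I_p -> R) (g : forall m : nat, ('I_m -> TX) -> 'I_p -> R)
  (F : 'I_p -> R -> R -> R)
  (a : bool)
  (* version of Y(a) = E[f(X_1(a)) | S(a), W] *)
  (Ya : TS * TW -> 'I_p -> R)
  (theta : 'I_p -> R) (c delta : R)
  (* version of E[F_j(tY_j(a), th) | S(a), W] entering Delta_{mj}(a, th) *)
  (ceS : nat -> 'I_p -> R -> TS * TW -> R)
  (ttheta : nat -> 'I_p -> R)
  (* version of E[F_j(tY_j, ttheta_mj) | A, W] *)
  (ceA : nat -> 'I_p -> bool * TW -> R) :
  (* measurability of the random elements *)
  measurable_fun setT A -> measurable_fun setT W ->
  (forall b, measurable_fun setT (S b)) ->
  (forall b i, measurable_fun setT (Xpot b i)) ->
  (* rows of X(b) conditionally i.i.d. given (S(b), W) *)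
  (forall b, cond_iid_given P (Xpot b) (fun x => (S b x, W x))) ->
  (* g and F are measurable *)
  (forall m j, prod_measurable (fun r => g m r j)) ->
  (forall j th, measurable_fun setT (fun y => F j y th)) ->
  (* consistency *)
  (forall i x, X i x = if A x then Xpot true i x else Xpot false i x) ->
  (* positivity: P(A = 1 | W) in (0,1) *)
  (exists pi : TW -> R, cond_exp_version P W (ind [set x | A x]) pi /\
     forall x, 0 < pi (W x) < 1) ->
  (* no unmeasured confounders: A _||_ X(b) | W *)
  (forall b, cond_indep_given P A (Xpot b) W) ->
  (* Y(a) = E[f(X_1(a)) | S(a), W] *)
  (forall j, cond_exp_version P (fun x => (S a x, W x))
                (fun x => f (Xpot a 0%N x) j) (fun u => Ya u j)) ->
  (* M_j(th) = E[F_j(Y_j(a), th)] is well defined and differentiable *)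
  (forall j th, P.-integrable setT
                  (fun x => (F j (Ya (S a x, W x) j) th)%:E)) ->
  let M := fun j th => fine (\int[P]_x (F j (Ya (S a x, W x) j) th)%:E)%E in
  (forall j th, derivable (M j) th 1) ->
  (* theta_aj solves M_j = 0 *)
  (forall j, M j (theta j) = 0) ->
  0 < c -> 0 < delta ->
  (forall j th, `|th - theta j| <= delta -> c <= `|derive1 (M j) th|) ->
  (* Delta_{mj}(a, th) via versions of the conditional expectations *)
  (forall m j th, `|th - theta j| <= delta ->
     cond_exp_version P (fun x => (S a x, W x))
       (fun x => F j (g m (fun i => Xpot a (val i) x) j) th) (ceS m j th)) ->
  (* delta_m = max_j sup_{th in B(theta_aj, delta)} |E[Delta_mj(a, th)]| = o(1) *)
  (forall eps : R, 0 < eps -> exists N : nat, forall m : nat, (N <= m)%N ->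
     forall j th, `|th - theta j| <= delta ->
       `| fine (\int[P]_x (ceS m j th (S a x, W x)
                          - F j (Ya (S a x, W x) j) th)%:E)%E | <= eps) ->
  (* ttheta_mj in B(theta_aj, delta) solves E[E[F_j(tY_j, th) | A = a, W]] = 0 *)
  (forall m j, `|ttheta m j - theta j| <= delta) ->
  (forall m j, cond_exp_version P (fun x => (A x, W x))
       (fun x => F j (g m (fun i => X (val i) x) j) (ttheta m j)) (ceA m j)) ->
  (forall m j, (\int[P]_x (ceA m j (a, W x))%:E = 0)%E) ->
  (* conclusion: ttheta_aj - theta_aj -> 0 as m -> oo *)
  forall j, (fun m => ttheta m j - theta j) @ \oo --> (0 : R).
Proof.
(* Neither the conditional i.i.d. structure of the rows nor the definition of
   Y(a) as a conditional mean is needed: only the bias bound delta_m links the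
   two estimating equations. *)
move=> mA mW _ _ _ gmeas Fmeas cons [pi [vpi pi01]] indep _ iFYa M dM Mtheta
  c0 _ hc vceS delta_o1 tball vceA ceA0 j.
pose Za m x := F j (g m (fun i => Xpot a (val i) x) j) (ttheta m j).
have EZa0 m : (\int[P]_x (Za m x)%:E = 0)%E.
  rewrite -(ceA0 m j).
  apply: (adjustment_formula P a pi mA mW vpi pi01 _ (Za m) _ _ _ _ (vceA m j)).
  - by have [] := vceS m j _ (tball m j).
  - apply: (cond_indep_given_rows P _ _ (fun r => F j (g m r j) (ttheta m j)))
      (indep a).
    exact: prod_measurable_comp (Fmeas j (ttheta m j)) (gmeas m j).
  - move=> x Ax; rewrite /Za; congr (F j (g m _ j) _).
    by apply/funext => i; rewrite cons Ax; case: (a).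
  - by rewrite ceA0.
have M_eq m : M j (ttheta m j) = - fine (\int[P]_x (ceS m j (ttheta m j) (S a x, W x)
                                   - F j (Ya (S a x, W x) j) (ttheta m j))%:E)%E.
  have [_ _ iceS eqceS] := vceS m j _ (tball m j).
  under eq_integral do rewrite EFinB.
  rewrite (integralB measurableT iceS (iFYa j _)).
  have := eqceS setT measurableT; rewrite preimage_setT EZa0 => <-.
  by rewrite sub0e fineN opprK.
apply/cvgrPdist_le => e e0.
have [N HN] := delta_o1 (e * c) (mulr_gt0 e0 c0).
exists N => // m /= Nm; rewrite sub0r normrN.
have := dist_root_le_norm (dM j) (Mtheta j) (hc j) (tball m j).
rewrite M_eq normrN mulrC => /le_trans /(_ (HN m Nm j _ (tball m j))).
by rewrite ler_pM2r.
Qed.
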